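(* Let $a,d\in\mathbb C$ with $a\notin\mathbb Z$ and $d\notin\{0,-1,-2,\dots\}$. Then, as an identity of formal power series in $x,y$, $$\mathrm H_5(a;d;x,y)={}_1F_1(a;d;x)\,{}_0F_1(1-a;-y)+\sum_{k=1}^\infty\sum_{l=1}^k\frac{(-1)^{k+l}(k-1)!}{(l-1)!\,l!\,(k-l)!}\,\frac{1}{(1-a)_l(d)_k}\,x^ky^l\,{}_1F_1(a+k;d+k;x)\,{}_0F_1(1-a+l;-y).$$
   Context: Pochhammer symbol: $(\lambda)_k=\Gamma(\lambda+k)/\Gamma(\lambda)$ for every integer $k$ (possibly negative) whenever defined; $(\lambda)_0=1$. ${}_1F_1(a;c;x)=\sum_{k\ge0}\frac{(a)_k}{(c)_k k!}x^k$, ${}_0F_1(c;x)=\sum_{k\ge0}\frac{x^k}{(c)_k k!}$. Confluent Horn function $\mathrm H_5(a;d;x,y)=\sum_{p,q\ge0}\frac{(a)_{p-q}}{(d)_p\,p!\,q!}x^py^q$. All functions are regarded as formal power series in $x,y$; the infinite double sum converges in the formal (degree) topology. *)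

From HB Require Import structures.
From mathcomp Require Import all_boot all_order all_algebra.
Set Implicit Arguments. Unset Strict Implicit. Unset Printing Implicit Defensive.
Import Order.TTheory GRing.Theory Num.Theory.
Local Open Scope ring_scope.

Section Defs.
Variable C : numClosedFieldType.

Definition poch (x : C) (n : nat) : C := \prod_(i < n) (x + i%:R).

(* Pochhammer symbol for integer index: Gamma(x+k)/Gamma(x);
   for k = -(j+1) this is 1/((x-1)(x-2)...(x-(j+1))) = 1/(x-(j+1))_(j+1). *)
Definition pochZ (x : C) (k : int) : C :=
  match k with
  | Posz n => poch x n
  | Negz j => (poch (x - (j.+1)%:R) j.+1)^-1
  end.

(* Formal power series in x, y: coefficient of x^p y^q. *)
Definition fps2 := nat -> nat -> C.

Definition fps2_mul (f g : fps2) : fps2 := fun m n =>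
  \sum_(i < m.+1) \sum_(j < n.+1) f i j * g (m - i)%N (n - j)%N.

Definition fps2_shift (k l : nat) (f : fps2) : fps2 := fun m n =>
  if (k <= m)%N && (l <= n)%N then f (m - k)%N (n - l)%N else 0.

Definition fps2_scale (c : C) (f : fps2) : fps2 := fun m n => c * f m n.

Definition H5 (a d : C) : fps2 := fun p q =>
  pochZ a (p%:Z - q%:Z) / (poch d p * p`!%:R * q`!%:R).

Definition F11x (a c : C) : fps2 := fun p q =>
  if q == 0%N then poch a p / (poch c p * p`!%:R) else 0.

Definition F01negy (c : C) : fps2 := fun p q =>
  if p == 0%N then (-1) ^+ q / (poch c q * q`!%:R) else 0.

Definition coef_kl (a d : C) (k l : nat) : C :=
  (-1) ^+ (k + l) * (k.-1)`!%:R / ((l.-1)`!%:R * l`!%:R * (k - l)`!%:R)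
  / (poch (1 - a) l * poch d k).

Definition term_kl (a d : C) (k l : nat) : fps2 :=
  fps2_scale (coef_kl a d k l)
    (fps2_shift k l (fps2_mul (F11x (a + k%:R) (d + k%:R))
                              (F01negy (1 - a + l%:R)))).

End Defs.

From HB Require Import structures.
From mathcomp Require Import all_boot all_order all_algebra.
From mathcomp Require Import ring zify.
Set Implicit Arguments. Unset Strict Implicit. Unset Printing Implicit Defensive.
Import Order.TTheory GRing.Theory Num.Theory.
Local Open Scope ring_scope.

(* All series involved have coefficients of the form
   W * (something), with W = (-1)^n / ((d)_m m! n! (1-a)_n) for x^m y^n:
   the left side gives (a-n)_m, the product 1F1 0F1 gives (a)_m, and the
   (k,l) term gives (-1)^k C(m,k) k! (a+k)_(m-k) C(k-1,l-1) C(n,l).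
   Summing over l by Vandermonde turns k! C(k-1,l-1) C(n,l) into (n)_k, and
   the remaining sum over k is the Chu-Vandermonde identity
   sum_k (-1)^k C(m,k) (n)_k (a+k)_(m-k) = (a-n)_m. *)

Section Pochhammer.
Variable C : numClosedFieldType.
Implicit Types x y : C.

Lemma poch0 x : poch x 0 = 1.
Proof. by rewrite /poch big_ord0. Qed.

Lemma pochSr x n : poch x n.+1 = poch x n * (x + n%:R).
Proof. by rewrite /poch big_ord_recr. Qed.

Lemma pochSl x n : poch x n.+1 = x * poch (x + 1) n.
Proof.
rewrite /poch big_ord_recl /= addr0; congr (_ * _).
by apply: eq_bigr => i _; rewrite /bump /= add1n -natr1; ring.
Qed.

Lemma pochD x i j : poch x (i + j) = poch x i * poch (x + i%:R) j.
Proof.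
elim: j => [|j IH]; first by rewrite addn0 poch0 mulr1.
by rewrite addnS !pochSr IH mulrA natrD addrA.
Qed.

Lemma poch_neq0 x n : (forall i, (i < n)%N -> x + i%:R != 0) -> poch x n != 0.
Proof. by move=> h; apply/prodf_neq0 => i _; exact: h. Qed.

Lemma poch_refl x n : (-1) ^+ n * poch (1 - x) n = poch (x - n%:R) n.
Proof.
elim: n x => [|n IH] x; first by rewrite !poch0 mulr1.
rewrite pochSr pochSl exprS.
have -> : x - n.+1%:R + 1 = x - n%:R by rewrite -natr1; ring.
rewrite -IH; ring.
Qed.

Lemma poch_nat n k : poch (n%:R : C) k = ((n + k).-1 ^_ k)%:R.
Proof.
case: n => [|n].
  case: k => [|k]; first by rewrite poch0 ffactn0.
  by rewrite pochSl add0r mul0r ffact_small.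
elim: k => [|k IH]; first by rewrite poch0 ffactn0.
by rewrite pochSr IH addnS /= addSn ffactSS natrM -natrD addSn mulrC.
Qed.

Lemma poch_Chu_Vandermonde x y m :
  \sum_(0 <= k < m.+1)
     (-1) ^+ k * 'C(m, k)%:R * poch x k * poch (y + k%:R) (m - k)
  = poch (y - x) m.
Proof.
elim: m x y => [|m IH] x y; first by rewrite big_nat1 !poch0 expr0 bin0 !mul1r.
rewrite big_nat_recl //.
have sum_binm : \sum_(0 <= k < m.+1) (-1) ^+ k.+1 * 'C(m, k)%:R * poch x k.+1
                  * poch (y + k.+1%:R) (m.+1 - k.+1) = - x * poch (y - x) m.
  have -> : y - x = (y + 1) - (x + 1) by ring.
  rewrite -(IH (x + 1) (y + 1)) big_distrr; apply: eq_bigr => k _ /=.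
  have -> : y + k.+1%:R = y + 1 + k%:R by rewrite -natr1; ring.
  rewrite exprS pochSl subSS; ring.
have sum_binmS : poch (y + 0%:R) (m.+1 - 0)
    + \sum_(0 <= k < m.+1) (-1) ^+ k.+1 * 'C(m, k.+1)%:R * poch x k.+1
                           * poch (y + k.+1%:R) (m.+1 - k.+1)
    = (y + m%:R) * poch (y - x) m.
  pose f k := (-1) ^+ k * 'C(m, k)%:R * poch x k * poch (y + k%:R) (m.+1 - k).
  have -> : poch (y + 0%:R) (m.+1 - 0) = f 0%N by rewrite /f expr0 bin0 poch0 !mul1r.
  rewrite -(big_nat_recl _ _ f (leq0n _)) big_nat_recr //=.
  rewrite {2}/f bin_small // mulr0n mulr0 !mul0r addr0 -IH big_distrr.
  apply: eq_big_nat => k /andP [_ hk]; rewrite /f subSn // pochSr.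
  have -> : y + k%:R + (m - k)%:R = y + m%:R by rewrite -addrA -natrD subnKC.
  rewrite /=; ring.
rewrite [X in _ + X](eq_bigr (fun k =>
      (-1) ^+ k.+1 * 'C(m, k.+1)%:R * poch x k.+1 * poch (y + k.+1%:R) (m.+1 - k.+1)
    + (-1) ^+ k.+1 * 'C(m, k)%:R * poch x k.+1 * poch (y + k.+1%:R) (m.+1 - k.+1)));
  last by move=> k _; rewrite binS natrD; ring.
rewrite big_split /= addrA sum_binm expr0 bin0 poch0 !mul1r sum_binmS pochSr; ring.
Qed.

Lemma pochZ_subz_mul_poch (a : C) m n : (forall z : int, a != z%:~R) ->
  pochZ a (m%:Z - n%:Z) * poch (1 - a) n = (-1) ^+ n * poch (a - n%:R) m.
Proof.
move=> ha; have sign_sq : (-1) ^+ n * (-1) ^+ n = 1 :> C.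
  by rewrite -exprMn mulrNN mulr1 expr1n.
case: (leqP n m) => hnm.
  rewrite subzn //= -[in RHS](subnKC hnm) pochD -poch_refl.
  have -> : a - n%:R + n%:R = a by ring.
  by rewrite !mulrA sign_sq mul1r mulrC.
have -> : m%:Z - n%:Z = Negz (n - m).-1.
  rewrite NegzE prednK ?subn_gt0 //.
  by rewrite -(subzn (ltnW hnm)) opprB.
rewrite [pochZ _ _]/pochZ prednK ?subn_gt0 //; set j := (n - m)%N.
have poch_j_neq0 : poch (a - j%:R) j != 0.
  apply: poch_neq0 => i hi; apply/eqP => h; move/eqP: (ha (j - i)%N); apply.
  rewrite -pmulrn (natrB _ (ltnW hi)).
  have -> : a = a - (a - j%:R + i%:R) by rewrite h subr0.
  ring.
have split_n : (-1) ^+ n * poch (1 - a) n = poch (a - n%:R) m * poch (a - j%:R) j.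
  rewrite poch_refl.
  have -> : poch (a - n%:R) n = poch (a - n%:R) (m + j) by rewrite subnKC // ltnW.
  rewrite pochD.
  by have -> : a - n%:R + m%:R = a - j%:R by rewrite /j (natrB _ (ltnW hnm)); ring.
have -> : poch (1 - a) n = (-1) ^+ n * (poch (a - n%:R) m * poch (a - j%:R) j).
  by rewrite -split_n mulrA sign_sq mul1r.
by rewrite mulrCA [_^-1 * _]mulrCA mulVf // mulr1.
Qed.

Lemma F11x_F01negy_mulE (A c b : C) p q :
  fps2_mul (F11x A c) (F01negy b) p q = F11x A c p 0 * F01negy b 0 q.
Proof.
rewrite /fps2_mul big_ord_recr /= big1 ?add0r; last first.
  move=> i _; apply: big1 => j _; rewrite /F01negy.
  by rewrite ifF ?mulr0 //; apply/negbTE; rewrite subn_eq0 -ltnNge.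
rewrite big_ord_recl big1 ?addr0 ?subnn ?subn0 // => j _.
by rewrite /F11x /= mul0r.
Qed.

End Pochhammer.

Lemma sum_bin_pred_Vandermonde k n : (0 < k)%N ->
  (\sum_(1 <= l < k.+1) 'C(k.-1, l.-1) * 'C(n, l))%N = 'C((n + k).-1, k).
Proof.
case: k => [//|k] _.
rewrite big_add1 /= addnS /= addnC -binomial.Vandermonde.
rewrite -(big_mkord xpredT (fun j => 'C(k, j) * 'C(n, k.+1 - j))%N).
rewrite [RHS]big_nat_recr //= bin_small // mul0n addn0 big_nat_rev /=.
apply: eq_big_nat => l /andP [_ hl].
by rewrite add0n subSS bin_sub ?subSn ?subKn // -ltnS.
Qed.

Section Coefficients.
Variables (C : numClosedFieldType) (a d : C).
Hypothesis a_nonint : forall z : int, a != z%:~R.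
Hypothesis d_nonpos : forall n : nat, d != - n%:R.

Lemma poch_dS_neq0 k j : poch (d + k%:R) j != 0.
Proof.
apply: poch_neq0 => i _; apply/eqP => h; move/eqP: (d_nonpos (k + i)%N); apply.
have -> : d = d - (d + k%:R + i%:R) by rewrite h subr0.
rewrite natrD; ring.
Qed.

Lemma poch_d_neq0 j : poch d j != 0.
Proof. by have := poch_dS_neq0 0 j; rewrite addr0. Qed.

Lemma poch_1subaS_neq0 k j : poch (1 - a + k%:R) j != 0.
Proof.
apply: poch_neq0 => i _; apply/eqP => h; move/eqP: (a_nonint (k + i).+1%N); apply.
have -> : a = a + (1 - a + k%:R + i%:R) by rewrite h addr0.
rewrite -pmulrn -natr1 natrD; ring.
Qed.

Lemma poch_1suba_neq0 j : poch (1 - a) j != 0.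
Proof. by have := poch_1subaS_neq0 0 j; rewrite addr0. Qed.

Lemma fact_natr_neq0 j : (j`!%:R : C) != 0.
Proof. by rewrite pnatr_eq0 -lt0n fact_gt0. Qed.

Variables m n : nat.

Definition coef_weight : C :=
  (-1) ^+ n / (poch d m * m`!%:R * n`!%:R * poch (1 - a) n).

Lemma H5_coefE : H5 a d m n = coef_weight * poch (a - n%:R) m.
Proof.
rewrite /H5 /coef_weight.
have -> : pochZ a (m%:Z - n%:Z) = (-1) ^+ n * poch (a - n%:R) m / poch (1 - a) n.
  by rewrite -pochZ_subz_mul_poch // mulfK ?poch_1suba_neq0.
by field; rewrite ?poch_d_neq0 ?poch_1suba_neq0 ?fact_natr_neq0.
Qed.

Lemma F11x_F01negy_coefE :
  fps2_mul (F11x a d) (F01negy (1 - a)) m n = coef_weight * poch a m.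
Proof.
rewrite F11x_F01negy_mulE /F11x /F01negy /= /coef_weight.
by field; rewrite ?poch_d_neq0 ?poch_1suba_neq0 ?fact_natr_neq0.
Qed.

Lemma term_kl_coefE k l : (1 <= k <= m)%N -> (1 <= l <= k)%N ->
  term_kl a d k l m n =
    coef_weight * (-1) ^+ k * 'C(m, k)%:R * k`!%:R * poch (a + k%:R) (m - k)
    * ('C(k.-1, l.-1) * 'C(n, l))%:R.
Proof.
move=> /andP [k_gt0 le_km] /andP [l_gt0 le_lk].
rewrite /term_kl /fps2_scale /fps2_shift le_km /=.
case: (leqP l n) => [le_ln|lt_nl] /=; last by rewrite (bin_small lt_nl) muln0 !mulr0.
rewrite F11x_F01negy_mulE /F11x /F01negy /= /coef_kl /coef_weight.
have split_fact p q : (q <= p)%N -> (p`!%:R : C) = 'C(p, q)%:R * q`!%:R * (p - q)`!%:R.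
  by move=> le_qp; rewrite -!natrM -mulnA bin_fact.
have bin_natr_neq0 p q : (q <= p)%N -> ('C(p, q)%:R : C) != 0.
  by move=> le_qp; rewrite pnatr_eq0 -lt0n bin_gt0.
have le_pred : (l.-1 <= k.-1)%N by rewrite -!subn1 leq_sub2r.
have sub_pred : (k.-1 - l.-1 = k - l)%N by lia.
rewrite -[in poch d m](subnKC le_km) pochD.
rewrite -[in poch (1 - a) n](subnKC le_ln) pochD.
rewrite (split_fact _ _ le_km) (split_fact _ _ le_ln) (split_fact _ _ le_pred) sub_pred.
rewrite -[in (-1) ^+ n](subnK le_ln) !exprD natrM.
by field; rewrite ?poch_d_neq0 ?poch_1suba_neq0 ?fact_natr_neq0 ?poch_dS_neq0
  ?poch_1subaS_neq0 ?bin_natr_neq0.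
Qed.

Lemma sum_term_kl_coefE :
  \sum_(1 <= k < m.+1) \sum_(1 <= l < k.+1) term_kl a d k l m n
  = coef_weight * \sum_(1 <= k < m.+1)
      (-1) ^+ k * 'C(m, k)%:R * poch (n%:R) k * poch (a + k%:R) (m - k).
Proof.
rewrite big_distrr; apply: eq_big_nat => k /andP [k_gt0 lt_km].
have le_km : (1 <= k <= m)%N by rewrite k_gt0 -ltnS.
rewrite (eq_big_nat _ _ (fun l (hl : (1 <= l < k.+1)%N) => term_kl_coefE le_km hl)).
rewrite -big_distrr -natr_sum sum_bin_pred_Vandermonde //.
rewrite poch_nat -bin_ffact !natrM /=; ring.
Qed.

End Coefficients.

Theorem mainTheorem10 (C : numClosedFieldType) (a d : C)
  (ha : forall z : int, a != z%:~R)
  (hd : forall n : nat, d != - n%:R) :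
  forall m n : nat,
    H5 a d m n =
      fps2_mul (F11x a d) (F01negy (1 - a)) m n
      + \sum_(1 <= k < m.+1) \sum_(1 <= l < k.+1) term_kl a d k l m n.
Proof.
move=> m n.
rewrite (H5_coefE ha hd) (F11x_F01negy_coefE ha hd) (sum_term_kl_coefE ha hd).
rewrite -mulrDr; congr (_ * _).
rewrite -(poch_Chu_Vandermonde n%:R a m) big_ltn //.
by rewrite expr0 bin0 poch0 addr0 subn0 !mul1r.
Qed.
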